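(* For every $n>0$, there are finite alphabets $\Sigma_I,\Sigma_O$ and a language $L_n'\subseteq(\Sigma_I\times\Sigma_O)^\omega$ recognized by a finitary Büchi automaton with costs $\mathcal{A}_n'$ with $O(n)$ states such that: Player $O$ wins $\Gamma_f(L_n')$ for every delay function $f$; an optimal winning strategy for Player $O$ in $\Gamma_{f_{2^n}}(L_n')$ has cost $0$; and for every $k<2^n$, an optimal winning strategy for Player $O$ in $\Gamma_{f_k}(L_n')$ has cost $n$.
   Context: A parity automaton with costs is a tuple $\mathcal{A}=(Q,\Sigma,q_I,\delta,\Omega,\mathrm{Cst})$ with a finite set $Q$ of states, a finite alphabet $\Sigma$, an initial state $q_I$, a deterministic complete transition function $\delta\colon Q\times\Sigma\to Q$, a coloring $\Omega\colon Q\to\mathbb{N}$, and a cost function $\mathrm{Cst}$ assigning to every transition $(q,a,\delta(q,a))$ either $\epsilon$ or $\mathtt{i}$ (increment-transition). A finitary Büchi automaton is one in which every transition is an increment-transition and $\Omega(Q)=\{1,2\}$. The run on $a_0a_1\cdots$ is $(q_0,a_0,q_1)(q_1,a_1,q_2)\cdots$ with $q_0=q_I$, $q_{j+1}=\delta(q_j,a_j)$; the cost of a finite run is its number of increment-transitions. For odd $c$, $\mathrm{Ans}(c)=\{c'\in\Omega(Q)\mid c'>c,\ c'\text{ even}\}$. For an infinite run $\rho$ and $n$, $\mathrm{Cor}(\rho,n)=0$ if $\Omega(q_n)$ is even, and otherwise it is the minimal cost of $(q_n,a_n,q_{n+1})\cdots(q_{n'-1},a_{n'-1},q_{n'})$ over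 $n'>n$ with $\Omega(q_{n'})\in\mathrm{Ans}(\Omega(q_n))$ ($\min\emptyset=\infty$). The run is accepting if $\limsup_n\mathrm{Cor}(\rho,n)<\infty$; $L(\mathcal{A})$ is the set of infinite words whose run is accepting. A delay function is a map $f\colon\mathbb{N}\to\mathbb{N}\setminus\{0\}$; for $k\ge0$, $f_k$ denotes the delay function with $f_k(0)=k+1$ and $f_k(i)=1$ for $i>0$. For $L\subseteq(\Sigma_I\times\Sigma_O)^\omega$, the delay game $\Gamma_f(L)$ is played in rounds $i=0,1,2,\ldots$: in round $i$, Player $I$ picks $u_i\in\Sigma_I^{f(i)}$, then Player $O$ picks $v_i\in\Sigma_O$. Player $O$ wins the play if the outcome, i.e., the word over $\Sigma_I\times\Sigma_O$ pairing $u_0u_1u_2\cdots$ and $v_0v_1v_2\cdots$ letterwise, is in $L$. A strategy for Player $O$ is a map $\tau_O\colon\Sigma_I^*\to\Sigma_O$; a play is consistent with $\tau_O$ if $v_i=\tau_O(u_0\cdots u_i)$ for all $i$; $\tau_O$ is winning if every consistent play is won by Player $O$, and Player $O$ wins the game if she has a winning strategy. For a winning strategy $\tau_O$ in $\Gamma_f(L(\mathcal{A}))$, its cost is $\mathrm{Cst}_\mathcal{A}(\tau_O)=\sup_w\limsup_{n\to\infty}\mathrm{Cor}(\rho(w),n)$, where $w$ ranges over outcomes of plays consistent with $\tau_O$ and $\rho(w)$ is the run of $\mathcal{A}$ on $w$; a winning strategy is optimal if its cost is minimal among all winning strategies of Player $O$ in $\Gamma_f(L(\mathcal{A}))$. 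*)

From mathcomp Require Import all_boot.
Set Implicit Arguments. Unset Strict Implicit. Unset Printing Implicit Defensive.

(* Parity automaton with costs over alphabet S (deterministic, complete).
   [incr q a = true] iff the transition (q,a,delta q a) is an increment-transition
   (cost i), [false] iff its cost is epsilon. *)
Record PAC (S : finType) := MkPAC {
  st : finType;
  qI : st;
  delta : st -> S -> st;
  col : st -> nat;
  incr : st -> S -> bool }.
Arguments qI {S} A : rename.
Arguments delta {S} A _ _ : rename.
Arguments col {S} A _ : rename.
Arguments incr {S} A _ _ : rename.

Definition finitary_buchi (S : finType) (A : PAC S) : Prop :=
  (forall q a, incr A q a) /\
  (forall q, col A q = 1 \/ col A q = 2) /\
  (exists q, col A q = 1) /\ (exists q, col A q = 2).

Fixpoint run_st (S : finType) (A : PAC S) (w : nat -> S) (n : nat) : st A :=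
  match n with
  | 0 => qI A
  | m.+1 => delta A (run_st A w m) (w m)
  end.

Definition seg_cost (S : finType) (A : PAC S) (w : nat -> S) (n n' : nat) : nat :=
  count (fun j => incr A (run_st A w j) (w j)) (iota n (n' - n)).

Definition Ans (S : finType) (A : PAC S) (c c' : nat) : Prop :=
  (exists q, col A q = c') /\ c < c' /\ ~~ odd c'.

(* Cor(rho(w), n) <= b   (Cor is 0 at even colors, otherwise a min over a set,
   min of the empty set being infinity) *)
Definition Cor_le (S : finType) (A : PAC S) (w : nat -> S) (n b : nat) : Prop :=
  ~~ odd (col A (run_st A w n)) \/
  exists n', n < n' /\ Ans A (col A (run_st A w n)) (col A (run_st A w n'))
             /\ seg_cost A w n n' <= b.

Definition limsup_Cor_le (S : finType) (A : PAC S) (w : nat -> S) (b : nat) : Prop :=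
  exists N, forall n, N <= n -> Cor_le A w n b.

Definition accepts (S : finType) (A : PAC S) (w : nat -> S) : Prop :=
  exists b, limsup_Cor_le A w b.

Definition delay_fun (f : nat -> nat) : Prop := forall i, 0 < f i.
Definition fk (k : nat) : nat -> nat := fun i => if i == 0 then k.+1 else 1.

Definition blocks_prefix (SI : finType) (us : nat -> seq SI) (i : nat) : seq SI :=
  flatten [seq us l | l <- iota 0 i].

Definition moves_I (SI : finType) (f : nat -> nat) (us : nat -> seq SI) : Prop :=
  forall i, size (us i) = f i.

Definition is_outcome (SI SO : finType) (us : nat -> seq SI) (vs : nat -> SO)
    (w : nat -> (SI * SO)%type) : Prop :=
  forall j, Some (w j).1 = onth (blocks_prefix us j.+1) j /\ (w j).2 = vs j.

Definition stratO (SI SO : finType) := seq SI -> SO.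

Definition consistent_outcome (SI SO : finType) (f : nat -> nat)
    (tau : stratO SI SO) (w : nat -> (SI * SO)%type) : Prop :=
  exists us, moves_I f us /\
    is_outcome us (fun i => tau (blocks_prefix us i.+1)) w.

Definition winning (SI SO : finType) (A : PAC (SI * SO)%type)
    (f : nat -> nat) (tau : stratO SI SO) : Prop :=
  forall w, consistent_outcome f tau w -> accepts A w.

Definition O_wins (SI SO : finType) (A : PAC (SI * SO)%type)
    (f : nat -> nat) : Prop :=
  exists tau, winning A f tau.

Definition strat_cost_le (SI SO : finType) (A : PAC (SI * SO)%type)
    (f : nat -> nat) (tau : stratO SI SO) (c : nat) : Prop :=
  forall w, consistent_outcome f tau w -> limsup_Cor_le A w c.

(* an optimal winning strategy in Gamma_f(L(A)) has cost c, i.e. the minimum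
   of the costs of winning strategies exists and equals c *)
Definition optimal_cost (SI SO : finType) (A : PAC (SI * SO)%type)
    (f : nat -> nat) (c : nat) : Prop :=
  (exists tau, winning A f tau /\ strat_cost_le A f tau c) /\
  (forall tau, winning A f tau -> forall c', strat_cost_le A f tau c' -> c <= c').

From mathcomp Require Import all_boot zify.
Set Implicit Arguments. Unset Strict Implicit. Unset Printing Implicit Defensive.

(* Player I shows a counter that counts down modulo K = 2^n, together with a
   bit. Whenever the counter is 0, Player O guesses the bit that Player I will
   show the next time the counter is 0, that is K letters later; a wrong guess
   sends the automaton through an odd-coloured chain of n states, costing n.
   With O(n) states the automaton cannot check the countdown itself, so at
   every step Player O challenges one bit of the next counter value, namely
   a bit where it differs from the decremented current value if there is one.
   No run costs more than n, so every strategy is winning. With delay 2^n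
   Player O sees the bit before guessing and never pays; with a smaller delay
   Player I negates every guess, so every strategy pays n infinitely often. *)

Lemma seg_cost_all_incr (S : finType) (A : PAC S) w i j :
  (forall q a, incr A q a) -> seg_cost A w i j = j - i.
Proof.
move=> incrA; rewrite /seg_cost (@eq_count _ _ predT) ?count_predT ?size_iota //.
by move=> l; apply: incrA.
Qed.

Section Plays.
Variables (SI SO : finType) (us : nat -> seq SI).

Lemma blocks_prefixD i d :
  blocks_prefix us (i + d) = blocks_prefix us i ++ flatten [seq us l | l <- iota i d].
Proof. by rewrite /blocks_prefix iotaD map_cat flatten_cat. Qed.

Lemma blocks_prefixS i : blocks_prefix us i.+1 = blocks_prefix us i ++ us i.
Proof. by rewrite -addn1 blocks_prefixD /= cats0. Qed.

Lemma size_blocks_prefix_fk k i :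
  moves_I (fk k) us -> size (blocks_prefix us i.+1) = k.+1 + i.
Proof.
move=> movesI; elim: i => [|i IHi]; rewrite blocks_prefixS size_cat movesI.
  by rewrite /blocks_prefix /fk /= addn0.
by rewrite IHi /fk /=; lia.
Qed.

Lemma nth_blocks_prefix (vs : nat -> SO) w x0 i j :
  is_outcome us vs w -> j < size (blocks_prefix us i) ->
  nth x0 (blocks_prefix us i) j = (w j).1.
Proof.
move=> outw lt_j_i; have wj := esym (outw j).1.
have lt_j_j1 : j < size (blocks_prefix us j.+1) by rewrite -onthTE wj.
case: (leqP i j.+1) => [le_i|lt_i].
  by rewrite -(@onth_nth _ x0 _ _ _ wj) -(subnKC le_i) blocks_prefixD nth_cat lt_j_i.
by rewrite -(@onth_nth _ x0 _ _ _ wj) -(subnKC (ltnW lt_i)) blocks_prefixD nth_cat lt_j_j1.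
Qed.

End Plays.

Section Automaton.
Variable m : nat.
Local Notation n := m.+1.

Definition K := 2 ^ n.

Lemma K_gt0 : 0 < K. Proof. exact: expn_gt0. Qed.
Lemma n_lt_K : n < K. Proof. exact: ltn_expl. Qed.

Definition bit (i c : nat) := odd (c %/ 2 ^ i).

Lemma eq_from_bits l a b : a < 2 ^ l -> b < 2 ^ l ->
  (forall i, i < l -> bit i a = bit i b) -> a = b.
Proof.
elim: l a b => [|l IHl] a b lt_a lt_b eq_bits; first by rewrite expn0 in lt_a lt_b; lia.
have bit0 := eq_bits 0 (ltn0Sn l); rewrite /bit !expn0 !divn1 in bit0.
have half : a %/ 2 = b %/ 2.
  apply: IHl; rewrite ?ltn_divLR -?expnSr // => i lt_i.
  by have := eq_bits i.+1 lt_i; rewrite /bit expnS !divnMA.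
by rewrite (divn_eq a 2) (divn_eq b 2) !modn2 half bit0.
Qed.

(* [cnt t] is -t mod K, the value an honest countdown from 0 shows at position t. *)
Definition dec (c : nat) := (c + K.-1) %% K.
Definition cnt (t : nat) := (t * K.-1) %% K.

Lemma dec_cnt t : dec (cnt t) = cnt t.+1.
Proof. by rewrite /dec /cnt modnDml mulSnr. Qed.

Lemma cnt_lt t : cnt t < K. Proof. exact: ltn_pmod K_gt0. Qed.

Lemma cnt_eq0 t : (cnt t == 0) = (K %| t).
Proof.
have cop : coprime K K.-1 by rewrite -{1}(prednK K_gt0) coprimeSn.
exact: Gauss_dvdl cop.
Qed.

Definition challenge_index (c c' : nat) : 'I_n :=
  if [pick i : 'I_n | bit i (dec c) != bit i c'] is Some i then i else ord0.

Lemma challenge_indexP c c' : c' < K ->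
  bit (challenge_index c c') c' = bit (challenge_index c c') (dec c) -> dec c = c'.
Proof.
rewrite /challenge_index => lt_c'; case: pickP => [i neq_i | eq_bits].
  by move=> eq_i; rewrite eq_i eqxx in neq_i.
move=> _; apply: (@eq_from_bits n) => //; first exact: ltn_pmod K_gt0.
by move=> i lt_i; have /negbFE/eqP := eq_bits (Ordinal lt_i).
Qed.

Definition input := ('I_K * bool)%type.
Definition output := (bool * 'I_n)%type.
Definition letter := (input * output)%type.

Definition counter (x : letter) : nat := x.1.1.
Definition rbit (x : letter) := x.1.2.
Definition guess (x : letter) := x.2.1.
Definition challenge (x : letter) := x.2.2.

(* Outside a phase the automaton is [ready]. A phase opens when the counter
   is 0; in state [phase b i e] Player O has guessed the bit b that Player I
   will show when the counter is 0 again, and has challenged Player I to show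
   the bit e at position i of the next counter value. A failed challenge
   leads to the sink [caught]; a wrong guess leads to the odd-coloured chain
   [penalty 0], ..., [penalty (n-1)] back to [ready]. *)
Definition state := (bool + 'I_n + (bool * 'I_n * bool))%type.

Definition ready : state := inl (inl false).
Definition caught : state := inl (inl true).
Definition penalty (j : 'I_n) : state := inl (inr j).
Definition phase b i e : state := inr (b, i, e).

Definition track b (x : letter) :=
  phase b (challenge x) (bit (challenge x) (dec (counter x))).

Definition step (q : state) (x : letter) : state :=
  match q with
  | inl (inl false) => if counter x == 0 then track (guess x) x else ready
  | inl (inl true) => caught
  | inl (inr j) => if j.+1 < n then penalty (inord j.+1) else ready
  | inr (b, i, e) =>
      if bit i (counter x) != e then caught
      else if counter x != 0 then track b x
      else if rbit x != b then penalty ord0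
      else track (guess x) x
  end.

Definition colour (q : state) := if q is inl (inr _) then 1 else 2.

Definition aut : PAC letter :=
  {| st := state; qI := ready; delta := step; col := colour; incr := fun _ _ => true |}.

Lemma aut_finitary_buchi : finitary_buchi aut.
Proof.
split=> //; split; first by case=> [[[]|j]|x]; [right|right|left|right].
by split; [exists (penalty ord0) | exists ready].
Qed.

Lemma card_aut : #|st aut| = 5 * n + 2.
Proof. by rewrite /= !card_sum !card_prod !card_ord card_bool; lia. Qed.

Lemma run_stS w t : run_st aut w t.+1 = step (run_st aut w t) (w t).
Proof. by []. Qed.

Lemma seg_cost_aut w t t' : seg_cost aut w t t' = t' - t.
Proof. exact: seg_cost_all_incr. Qed.

Lemma run_penalty w t (j : 'I_n) d : run_st aut w t = penalty j -> j + d < n ->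
  run_st aut w (t + d) = penalty (inord (j + d)).
Proof.
move=> run_t; elim: d => [|d IHd] lt_jd; first by rewrite !addn0 run_t inord_val.
rewrite addnS run_stS IHd; last by lia.
rewrite /= inordK; last by lia.
by rewrite ifT ?addnS //; lia.
Qed.

Lemma run_penalty_exit w t (j : 'I_n) : run_st aut w t = penalty j ->
  run_st aut w (t + (n - j)) = ready.
Proof.
move=> run_t; have lt_j := ltn_ord j.
have -> : t + (n - j) = (t + (m - j)).+1 by lia.
rewrite run_stS (run_penalty run_t); last by lia.
by rewrite /= inordK ?ifF //; lia.
Qed.

Lemma Cor_le_n w t : Cor_le aut w t n.
Proof.
rewrite /Cor_le; case run_t: (run_st aut w t) => [[g|j]|x]; try by left.
right; exists (t + (n - j)); rewrite run_penalty_exit // seg_cost_aut.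
have := ltn_ord j; split; first lia.
by split; [split; [exists ready|] | lia].
Qed.

Lemma Cor_le_penalty0 w t c : run_st aut w t = penalty ord0 -> Cor_le aut w t c -> n <= c.
Proof.
move=> run_t [|[t' [lt_t [[_ [_ even_t']] cost]]]]; first by rewrite run_t.
rewrite seg_cost_aut in cost; rewrite leqNgt; apply/negP => lt_c.
have lt_d : 0 + (t' - t) < n by lia.
by move: even_t'; rewrite -(subnKC (ltnW lt_t)) (run_penalty run_t lt_d).
Qed.

Lemma counter_lt x : counter x < K. Proof. exact: ltn_ord. Qed.

Section Lookahead.
Variable w : nat -> letter.
Hypothesis guess_ahead : forall t, guess (w t) = rbit (w (t + K)).
Hypothesis challenge_next :
  forall t, challenge (w t) = challenge_index (counter (w t)) (counter (w t.+1)).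

Definition in_phase t b := exists s,
  [/\ s <= t < s + K, counter (w t) = cnt (t - s) & b = rbit (w (s + K))].

Definition tracking t (q : state) : Prop :=
  match q with
  | inl (inr _) => False
  | inr (b, i, e) =>
      [/\ i = challenge (w t), e = bit i (dec (counter (w t))) & in_phase t b]
  | _ => True
  end.

Lemma tracking_track t b : in_phase t b -> tracking t (track b (w t)).
Proof. by []. Qed.

Lemma in_phase_start t : counter (w t) = 0 -> in_phase t (guess (w t)).
Proof.
move=> c0; exists t; rewrite subnn /cnt mul0n mod0n guess_ahead.
by have := K_gt0; split=> //; lia.
Qed.

Lemma tracking_ready t : tracking t (step ready (w t)).
Proof. by rewrite /=; case: eqP => // c0; apply/tracking_track/in_phase_start. Qed.

Lemma tracking_step t q : tracking t q -> tracking t.+1 (step q (w t.+1)).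
Proof.
case: q => [[[] _|j []]|[[b i] e]] //; first exact: tracking_ready.
move=> [-> -> [s [/andP [le_st lt_t] c_t ->]]] /=.
case: ifP => // /negbFE/eqP; rewrite challenge_next => /(challenge_indexP (counter_lt _)).
rewrite c_t dec_cnt -subSn // => /esym c_t1.
have lt_t1 : 0 < t.+1 - s <= K by lia.
case: ifP => [nz_t1|/negbFE c0_t1].
  have not_end : t.+1 - s != K.
    by apply: contra nz_t1 => /eqP end_t1; rewrite c_t1 end_t1 cnt_eq0.
  by apply: tracking_track; exists s; split=> //; apply/andP; split; lia.
have end_t1 : s + K = t.+1.
  move: c0_t1; rewrite c_t1 cnt_eq0 => /(dvdn_leq (proj1 (andP lt_t1))); lia.
rewrite end_t1 eqxx /=.
by apply/tracking_track/in_phase_start/eqP.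
Qed.

Lemma tracking_run t : tracking t (run_st aut w t.+1).
Proof. by elim: t => [|t IHt]; [exact: tracking_ready | exact: tracking_step]. Qed.

Lemma tracking_limsup_Cor0 : limsup_Cor_le aut w 0.
Proof.
exists 0 => -[|t] _; left => //.
by have := tracking_run t; case: (run_st aut w t.+1) => [[]|].
Qed.

End Lookahead.

Definition input0 : input := (Ordinal K_gt0, false).

(* In the game with delay K, Player O answers position t after seeing t + K + 1 letters. *)
Definition lookahead_strategy (s : seq input) : output :=
  let t := size s - K.+1 in
  ((nth input0 s (t + K)).2, challenge_index (nth input0 s t).1 (nth input0 s t.+1).1).

Lemma lookahead_outcome w : consistent_outcome (fk K) lookahead_strategy w ->
  (forall t, guess (w t) = rbit (w (t + K))) /\
  (forall t, challenge (w t) = challenge_index (counter (w t)) (counter (w t.+1))).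
Proof.
move=> [us [movesI outw]]; have := K_gt0.
split=> t; rewrite /guess /challenge (outw t).2 /lookahead_strategy;
  rewrite (size_blocks_prefix_fk t movesI) addKn !(nth_blocks_prefix input0 outw) //;
  rewrite (size_blocks_prefix_fk t movesI); lia.
Qed.

Lemma lookahead_cost0 : strat_cost_le aut (fk K) lookahead_strategy 0.
Proof. by move=> w /lookahead_outcome [? ?]; apply: tracking_limsup_Cor0. Qed.

Section HonestCounter.
Variable w : nat -> letter.
Hypothesis counter_w : forall t, counter (w t) = cnt t.

Lemma run_ready_stays t d : run_st aut w t = ready ->
  (forall u, t <= u < t + d -> ~~ (K %| u)) -> run_st aut w (t + d) = ready.
Proof.
move=> run_t; elim: d => [|d IHd] ndvd; first by rewrite addn0.
rewrite addnS run_stS IHd => [|u lt_u]; last by apply: ndvd; lia.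
by rewrite /= counter_w cnt_eq0 ifF //; apply/negbTE/ndvd; lia.
Qed.

Lemma run_in_phase s u : K %| s -> run_st aut w s = ready -> u < K ->
  run_st aut w (s + u).+1 = track (guess (w s)) (w (s + u)).
Proof.
move=> dvd_s run_s; elim: u => [|u IHu] lt_u.
  by rewrite addn0 run_stS run_s /= counter_w cnt_eq0 dvd_s.
rewrite !addnS run_stS IHu ?(ltnW lt_u) //= !counter_w dec_cnt eqxx /=.
by rewrite cnt_eq0 -addnS (dvdn_addr _ dvd_s) gtnNdvd.
Qed.

Lemma run_phase_penalty s : K %| s -> run_st aut w s = ready ->
  rbit (w (s + K)) != guess (w s) ->
  run_st aut w (s + K).+1 = penalty ord0 /\ run_st aut w (s + K + K) = ready.
Proof.
move=> dvd_s run_s wrong_guess; have lt_nK := n_lt_K.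
have run_pen : run_st aut w (s + K).+1 = penalty ord0.
  have -> : s + K = (s + K.-1).+1 by lia.
  rewrite run_stS run_in_phase //= ?counter_w ?dec_cnt ?eqxx /=; last by lia.
  have -> : (s + K.-1).+1 = s + K by lia.
  by rewrite cnt_eq0 (dvdn_addr _ dvd_s) dvdnn /= wrong_guess.
split=> //; have := run_penalty_exit run_pen; rewrite subn0 => run_ready.
have -> : s + K + K = (s + K).+1 + n + (K - n.+1) by lia.
apply: run_ready_stays => // u /andP [ge_u lt_u].
rewrite -(subnKC (_ : s + K <= u)); last by lia.
by rewrite (dvdn_addr _ (dvdn_add dvd_s (dvdnn K))) gtnNdvd //; lia.
Qed.

End HonestCounter.

Section Adversary.
Variables (k : nat) (tau : stratO input output).
Hypothesis lt_k_K : k < K.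

(* Player I counts down honestly; when the counter is 0 at position t >= K
   he shows the negation of the guess that Player O made at position t - K,
   which depends only on the first t - K + k + 1 <= t letters. *)
Definition adversary_next (s : seq input) : input :=
  let t := size s in
  (Ordinal (cnt_lt t), [&& K <= t, K %| t & ~~ (tau (take (t - K + k.+1) s)).1]).

Fixpoint adversary_prefix t : seq input :=
  if t is t'.+1 then rcons (adversary_prefix t') (adversary_next (adversary_prefix t'))
  else [::].

Definition adversary_letter t := adversary_next (adversary_prefix t).

Definition adversary_blocks j :=
  if j is j'.+1 then [:: adversary_letter (k.+1 + j')] else adversary_prefix k.+1.

Definition adversary_play t : letter :=
  (adversary_letter t, tau (adversary_prefix (k.+1 + t))).

Lemma size_adversary_prefix t : size (adversary_prefix t) = t.
Proof. by elim: t => //= t IHt; rewrite size_rcons IHt. Qed.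

Lemma nth_adversary_prefix t j :
  j < t -> nth input0 (adversary_prefix t) j = adversary_letter j.
Proof.
elim: t => // t IHt lt_j /=; rewrite nth_rcons size_adversary_prefix.
have [lt_jt|ge_jt] := ltnP j t; first exact: IHt.
have -> : j = t by lia.
by rewrite eqxx.
Qed.

Lemma take_adversary_prefix j t :
  j <= t -> take j (adversary_prefix t) = adversary_prefix j.
Proof.
elim: t => [|t IHt] le_j; first by case: j le_j.
case: (ltngtP j t.+1) le_j => // [lt_j _|-> _]; last first.
  by rewrite take_oversize // size_adversary_prefix.
by rewrite /= -cats1 takel_cat ?size_adversary_prefix // IHt.
Qed.

Lemma blocks_prefix_adversary i :
  blocks_prefix adversary_blocks i.+1 = adversary_prefix (k.+1 + i).
Proof.
elim: i => [|i IHi]; first by rewrite blocks_prefixS /blocks_prefix /= addn0.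
by rewrite blocks_prefixS IHi addnS cats1.
Qed.

Lemma adversary_consistent : consistent_outcome (fk k) tau adversary_play.
Proof.
exists adversary_blocks; split.
  by case=> [|j] //; rewrite /fk /= size_rcons size_adversary_prefix.
move=> j; rewrite blocks_prefix_adversary; split=> //.
rewrite onthE (nth_map input0) ?size_adversary_prefix ?nth_adversary_prefix //; lia.
Qed.

Lemma counter_adversary t : counter (adversary_play t) = cnt t.
Proof. by rewrite /counter /= /adversary_letter /adversary_next size_adversary_prefix. Qed.

Lemma rbit_adversary s : K %| s ->
  rbit (adversary_play (s + K)) = ~~ guess (adversary_play s).
Proof.
move=> dvd_s; rewrite /rbit /= /adversary_letter /adversary_next size_adversary_prefix.
rewrite leq_addl (dvdn_addr _ dvd_s) dvdnn take_adversary_prefix; last by lia.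
by have -> : s + K - K + k.+1 = k.+1 + s by lia.
Qed.

Lemma adversary_penalty_often N :
  exists2 t, N <= t & run_st aut adversary_play t = penalty ord0.
Proof.
have dvd_phase M : K %| M * (K + K) by rewrite dvdn_mull // dvdn_addr.
have wrong_guess M :
    rbit (adversary_play (M * (K + K) + K)) != guess (adversary_play (M * (K + K))).
  by rewrite rbit_adversary //; case: guess.
have ready_phase M : run_st aut adversary_play (M * (K + K)) = ready.
  elim: M => [|M IHM] //; rewrite mulSnr addnA.
  exact: (run_phase_penalty counter_adversary (dvd_phase M) IHM (wrong_guess M)).2.
exists (N * (K + K) + K).+1; first by have := K_gt0; nia.
by have [] := run_phase_penalty counter_adversary (dvd_phase N) (ready_phase N) (wrong_guess N).
Qed.

Lemma adversary_cost c : strat_cost_le aut (fk k) tau c -> n <= c.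
Proof.
move=> cost; have [N0 cor] := cost _ adversary_consistent.
have [t le_t run_t] := adversary_penalty_often N0.
exact: Cor_le_penalty0 run_t (cor t le_t).
Qed.

End Adversary.

Lemma strat_cost_le_n f tau : strat_cost_le aut f tau n.
Proof. by move=> w _; exists 0 => t _; apply: Cor_le_n. Qed.

Lemma every_strategy_winning f tau : winning aut f tau.
Proof. by move=> w play_w; exists n; apply: strat_cost_le_n play_w. Qed.

End Automaton.

Theorem theorem6 :
  exists C : nat, forall n : nat, 0 < n ->
    exists (SI SO : finType) (A : PAC (SI * SO)%type),
      finitary_buchi A /\
      #|st A| <= C * n /\
      (forall f, delay_fun f -> O_wins A f) /\
      optimal_cost A (fk (2 ^ n)) 0 /\
      (forall k, k < 2 ^ n -> optimal_cost A (fk k) n).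
Proof.
exists 7 => -[//|m] _; exists (input m), (output m), (aut m).
pose tau0 : stratO (input m) (output m) := fun=> (false, ord0).
split; first exact: aut_finitary_buchi.
split; first by rewrite card_aut; lia.
split; first by move=> f _; exists tau0; apply: every_strategy_winning.
split.
  split=> //; exists (@lookahead_strategy m).
  by split; [apply: every_strategy_winning | apply: lookahead_cost0].
move=> k lt_k; split.
  by exists tau0; split; [apply: every_strategy_winning | apply: strat_cost_le_n].
by move=> tau _ c; apply: adversary_cost.
Qed.
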